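(* Let $\tau=(\tau_1,\dots,\tau_\ell)$ be a tuple of positive integers, $0\le k\le\ell$, and $\hat P_\tau=C\sqcup O$ the $k$-decomposition. Let $p_i,p'_i\in Y^i$ for $1\le i\le k$ and $a,a'\in Y^{k+1}$, and put $p_{k+1}=a$, $p'_{k+1}=a'$. Let $F$ be the face of $\mathcal{O}_{C,O}(\tau)$ on which both chain inequalities $x_{p_1}+\dots+x_{p_k}\le x_a$ and $x_{p'_1}+\dots+x_{p'_k}\le x_{a'}$ hold with equality. Let $I=\{i\in\{1,\dots,k+1\}: p_i\neq p'_i\}$ and define $\tau'=(\tau'_1,\dots,\tau'_\ell)$ by $\tau'_j=\tau_j-1$ if $j\in I$ and $\tau'_j=\tau_j$ otherwise. Identify $\hat P_{\tau'}$ with the induced subposet $\hat P_\tau\setminus\{p'_i: i\in I\}$ and let $\hat P_{\tau'}=C''\sqcup O''$ be its $k$-decomposition. Let $F'$ be the face of $\mathcal{O}_{C'',O''}(\tau')$ on which the chain inequality $x_{p_1}+\dots+x_{p_k}\le x_a$ holds with equality. Then the coordinate projection forgetting the coordinates $x_{p'_i}$, $i\in I$, is an affine isomorphism $\nu:F\to F'$. Moreover, each coordinate projected away contributes exactly one to the codimension: the codimension of $F$ in $\mathcal{O}_{C,O}(\tau)$ equals the codimension of $F'$ in $\mathcal{O}_{C'',O''}(\tau')$ plus $|I|$.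
   Context: The poset $P_\tau$ has elements $y^i_j$ ($1\le i\le\ell$, $1\le j\le\tau_i$) with $y^i_j<y^{i'}_{j'}$ iff $i<i'$; $Y^i=\{y^i_1,\dots,y^i_{\tau_i}\}$; $|\tau|=\sum_i\tau_i$. $\hat P_\tau=P_\tau\cup\{\hat0,\hat1\}$ with new minimum $\hat0$ and maximum $\hat1$, $Y^0=\{\hat0\}$, $Y^{\ell+1}=\{\hat1\}$; $\prec$ is the covering relation. For $0\le k\le\ell$ the $k$-decomposition is $C=Y^0\cup\dots\cup Y^k$, $O=Y^{k+1}\cup\dots\cup Y^{\ell+1}$. The chain-order polytope $\mathcal{O}_{C,O}(\tau)\subseteq\mathbb{R}^{\hat P_\tau}$ consists of all $x$ with $x_{\hat0}=0$, $x_{\hat1}=1$, $x_p\ge0$ for $p\in C$, $x_a\le x_b$ for $a,b\in O$ with $a\prec b$, and $x_{p_1}+\dots+x_{p_k}\le x_q$ for all $p_i\in Y^i$ ($1\le i\le k$), $q\in Y^{k+1}$ (chain inequalities). The same definitions apply to any tuple of positive integers in place of $\tau$. The codimension of a face $F$ of $\mathcal{O}_{C,O}(\tau)$ is $|\tau|-\dim F$. *)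

From HB Require Import structures.
From mathcomp Require Import all_boot all_order all_algebra.
From Stdlib Require Import ClassicalEpsilon.
Set Implicit Arguments. Unset Strict Implicit. Unset Printing Implicit Defensive.
Import Order.TTheory GRing.Theory Num.Theory.
Local Open Scope ring_scope.

(* The poset P_tau: elements y^i_j, i.e. pairs (level index i, j < tau_i).
   Levels are 0-based in the type: the tag i : 'I_(size tau) is level i+1. *)
Definition Ptau (tau : seq nat) : finType :=
  {i : 'I_(size tau) & 'I_(nth 0%N tau i)}.

Definition Phat (tau : seq nat) : finType := option (option (Ptau tau)).

Definition hat0 {tau : seq nat} : Phat tau := None.
Definition hat1 {tau : seq nat} : Phat tau := Some None.

(* level q = i  iff  q \in Y^i  (Y^0 = {hat0}, Y^(l+1) = {hat1}). *)
Definition level {tau : seq nat} (q : Phat tau) : nat :=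
  match q with
  | None => 0%N
  | Some None => (size tau).+1
  | Some (Some p) => (tag p).+1
  end.

Definition hlt {tau : seq nat} (q r : Phat tau) : bool := (level q < level r)%N.

Definition covers {tau : seq nat} (q r : Phat tau) : bool :=
  hlt q r && [forall c : Phat tau, ~~ (hlt q c && hlt c r)].

(* pp : 'I_k.+1 -> hat P_tau encodes (p_1, ..., p_k, p_(k+1)) with p_i in Y^i
   (the 0-based index i stands for the paper's index i+1). *)
Definition is_chain {tau : seq nat} {k : nat} (pp : 'I_k.+1 -> Phat tau) : Prop :=
  forall i : 'I_k.+1, level (pp i) = i.+1.

Definition chain_sum {R : realFieldType} {tau : seq nat} {k : nat}
  (x : {ffun Phat tau -> R}) (pp : 'I_k.+1 -> Phat tau) : R :=
  \sum_(i < k.+1 | i != ord_max) x (pp i).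

(* The chain-order polytope O_{C,O}(tau) for the k-decomposition
   C = Y^0 u ... u Y^k, O = Y^(k+1) u ... u Y^(l+1). *)
Definition chain_order_polytope (R : realFieldType) (tau : seq nat) (k : nat)
  (x : {ffun Phat tau -> R}) : Prop :=
  [/\ x hat0 = 0, x hat1 = 1,
      (forall q : Phat tau, (level q <= k)%N -> 0 <= x q),
      (forall q r : Phat tau, (k < level q)%N -> (k < level r)%N ->
          covers q r -> x q <= x r) &
      (forall pp : 'I_k.+1 -> Phat tau, is_chain pp ->
          chain_sum x pp <= x (pp ord_max))].

Definition pb (P : Prop) : bool := if excluded_middle_informative P then true else false.

Definition aff_indep {R : realFieldType} {T : finType} {d : nat}
  (v : 'I_d.+1 -> {ffun T -> R}) : Prop :=
  forall c : 'I_d.+1 -> R,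
    \sum_(i < d.+1) c i = 0 ->
    (forall t : T, \sum_(i < d.+1) c i * v i t = 0) ->
    forall i, c i = 0.

(* affine dimension of a (nonempty) set S in R^T: the largest d such that S
   contains d+1 affinely independent points (d <= #|T| always). *)
Definition affdim {R : realFieldType} {T : finType} (S : {ffun T -> R} -> Prop) : nat :=
  \max_(d < #|T|.+1 |
        pb (exists v : 'I_d.+1 -> {ffun T -> R}, (forall i, S (v i)) /\ aff_indep v)) d.

Definition codim {R : realFieldType} (tau : seq nat) (F : {ffun Phat tau -> R} -> Prop) : int :=
  (sumn tau)%:Z - (affdim F)%:Z.

Definition reduce_tau (tau : seq nat) (k : nat) (pp pp' : 'I_k.+1 -> Phat tau) : seq nat :=
  mkseq (fun j => (nth 0%N tau j -
                   nat_of_bool ((j < k.+1)%N && (pp (@inord k j) != pp' (@inord k j))))%N)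
        (size tau).
Arguments reduce_tau : clear implicits.
Arguments codim {R} tau F.
Arguments chain_order_polytope : clear implicits.

(* Along the face F the chain equalities force x_{p'_i} = x_{p_i} for every i:
   swapping p_i for p'_i in the tight chain p gives another chain inequality,
   which bounds x_{p'_i} by x_{p_i}, and symmetrically.  Hence a point of F is
   determined by its coordinates off {p'_i : i in I}, and extending a point of F'
   by x_{p'_i} := x_{p_i} inverts the projection.  Both maps are coordinate
   pullbacks, so they preserve affine independence and dim F = dim F', while
   |tau| = |tau'| + |I|. *)
From HB Require Import structures.
From mathcomp Require Import all_boot all_order all_algebra.
From Stdlib Require Import ClassicalEpsilon.
Set Implicit Arguments. Unset Strict Implicit. Unset Printing Implicit Defensive.
Import Order.TTheory GRing.Theory Num.Theory.
Local Open Scope ring_scope.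

Definition pullback (R : Type) (T T' : finType) (f : T' -> T) (x : {ffun T -> R}) :
  {ffun T' -> R} := [ffun t => x (f t)].

Lemma pullbackK (R : Type) (T T' : finType) (f : T' -> T) (g : T -> T') :
  cancel f g -> cancel (pullback (R := R) g) (pullback f).
Proof. by move=> fK y; apply/ffunP => t; rewrite !ffunE fK. Qed.

Section AffineDimension.

Variables (R : realFieldType) (T : finType).

Lemma aff_indep_leq_card (d : nat) (v : 'I_d.+1 -> {ffun T -> R}) :
  aff_indep v -> (d <= #|T|)%N.
Proof.
move=> v_indep.
pose M : 'M[R]_(d, #|T|) :=
  \matrix_(i < d, j < #|T|) (v (lift ord0 i) (enum_val j) - v ord0 (enum_val j)).
suff /eqP <- : row_free M by exact: rank_leq_col.
apply: inj_row_free => u uM0.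
pose c i := if unlift ord0 i is Some j then u 0 j else - \sum_(j < d) u 0 j.
have c0 : c ord0 = - \sum_(j < d) u 0 j by rewrite /c unlift_none.
have cS (j : 'I_d) : c (lift ord0 j) = u 0 j by rewrite /c liftK.
have c_eq0 : forall i, c i = 0.
  apply: v_indep => [|t]; rewrite big_ord_recl c0.
    by under [X in _ + X]eq_bigr do rewrite cS; rewrite addNr.
  under [X in _ + X]eq_bigr do rewrite cS.
  have := congr1 (fun A : 'M_(1, #|T|) => A 0 (enum_rank t)) uM0.
  rewrite !mxE => uMt0; rewrite -[RHS]uMt0 mulNr mulr_suml addrC -sumrB.
  by apply: eq_bigr => j _; rewrite mxE enum_rankK mulrBr.
by apply/matrixP => i j; rewrite mxE (ord1 i) -cS c_eq0.
Qed.

Lemma eq_aff_indep (d : nat) (v w : 'I_d.+1 -> {ffun T -> R}) :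
  v =1 w -> aff_indep v -> aff_indep w.
Proof.
by move=> vw v_indep c sum_c0 comb0; apply: v_indep => // t; under eq_bigr do rewrite vw.
Qed.

Lemma aff_indep_pullback (T' : finType) (f : T' -> T) (d : nat)
    (v : 'I_d.+1 -> {ffun T -> R}) :
  aff_indep (fun i => pullback f (v i)) -> aff_indep v.
Proof.
move=> indep_fv c sum_c0 comb0; apply: indep_fv => // t.
by rewrite -[RHS](comb0 (f t)); apply: eq_bigr => i _; rewrite ffunE.
Qed.

Definition has_aff_indep (S : {ffun T -> R} -> Prop) (d : nat) : Prop :=
  exists v : 'I_d.+1 -> {ffun T -> R}, (forall i, S (v i)) /\ aff_indep v.

Lemma affdim_widen (S : {ffun T -> R} -> Prop) (n : nat) : (#|T| <= n)%N ->
  affdim S = (\max_(d < n.+1 | pb (has_aff_indep S d)) d)%N.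
Proof.
move=> card_le; apply/eqP; rewrite eqn_leq; apply/andP; split;
  apply/bigmax_leqP => d Sd.
- have d_lt : (d < n.+1)%N by rewrite ltnS (leq_trans (ltnSE (ltn_ord d))).
  exact: (@leq_bigmax_cond _ _ (fun d : 'I_n.+1 => val d) (Ordinal d_lt)).
- have d_lt : (d < #|T|.+1)%N.
    move: Sd; rewrite /pb; case: excluded_middle_informative => // [[v [_]]] + _.
    by rewrite ltnS; exact: aff_indep_leq_card.
  exact: (@leq_bigmax_cond _ _ (fun d : 'I_#|T|.+1 => val d) (Ordinal d_lt)).
Qed.

End AffineDimension.

Lemma pb_eq (P Q : Prop) : (P <-> Q) -> pb P = pb Q.
Proof.
rewrite /pb => PQ.
case: (excluded_middle_informative P) => [p|np];
  case: (excluded_middle_informative Q) => [q|nq] //.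
- by case: nq; apply/PQ.
- by case: np; apply/PQ.
Qed.

Lemma affdim_eq_pullback (R : realFieldType) (T T' : finType)
    (e : T' -> T) (g : T -> T')
    (F : {ffun T -> R} -> Prop) (F' : {ffun T' -> R} -> Prop) :
  cancel e g ->
  (forall x, F x -> F' (pullback e x)) ->
  (forall y, F' y -> F (pullback g y)) ->
  (forall x, F x -> pullback g (pullback e x) = x) ->
  affdim F = affdim F'.
Proof.
move=> eK FF' F'F FK.
rewrite (affdim_widen F' (leq_card _ (can_inj eK))) /affdim.
apply: eq_bigl => d; apply: pb_eq; split=> [[v [Fv v_indep]]|[w [F'w w_indep]]].
- exists (fun i => pullback e (v i)); split=> [i|]; first exact: FF'.
  apply: (aff_indep_pullback (f := g)); apply: eq_aff_indep v_indep => i.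
  by rewrite FK.
- exists (fun i => pullback g (w i)); split=> [i|]; first exact: F'F.
  apply: (aff_indep_pullback (f := e)); apply: eq_aff_indep w_indep => i.
  by rewrite pullbackK.
Qed.

Definition level_preserving (tau tau' : seq nat) (f : Phat tau -> Phat tau') : Prop :=
  forall q, level (f q) = level q.

Lemma level_eq0 (tau : seq nat) (z : Phat tau) : (level z == 0%N) = (z == hat0).
Proof. by case: z => [[p|]|]. Qed.

Lemma level_eq_top (tau : seq nat) (z : Phat tau) :
  (level z == (size tau).+1) = (z == hat1).
Proof. by case: z => [[p|]|]; rewrite /hat1 ?eqxx // eqSS ltn_eqF. Qed.

Lemma covers_level_preserving (tau tau' : seq nat)
    (f : Phat tau -> Phat tau') (h : Phat tau' -> Phat tau) (q r : Phat tau) :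
  level_preserving f -> level_preserving h -> covers q r -> covers (f q) (f r).
Proof.
move=> f_level h_level; rewrite /covers /hlt !f_level => /andP[-> /forallP noc].
apply/forallP => c; apply/negP => /andP[qc cr].
by have := noc (h c); rewrite /hlt h_level qc cr.
Qed.

Lemma chain_sum_pullback (R : realFieldType) (tau tau' : seq nat) (k : nat)
    (f : Phat tau' -> Phat tau) (x : {ffun Phat tau -> R}) (pp : 'I_k.+1 -> Phat tau') :
  chain_sum (pullback f x) pp = chain_sum x (f \o pp).
Proof. by apply: eq_bigr => i _; rewrite ffunE. Qed.

Lemma chain_order_polytope_pullback (R : realFieldType) (tau tau' : seq nat) (k : nat)
    (f : Phat tau' -> Phat tau) (h : Phat tau -> Phat tau') (x : {ffun Phat tau -> R}) :
  size tau' = size tau -> level_preserving f -> level_preserving h ->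
  chain_order_polytope R tau k x -> chain_order_polytope R tau' k (pullback f x).
Proof.
move=> size_eq f_level h_level [x_hat0 x_hat1 x_ge0 x_mono x_chain]; split.
- by rewrite ffunE; have /eqP -> : f hat0 == hat0 by rewrite -level_eq0 f_level.
- rewrite ffunE; have /eqP -> // : f hat1 == hat1.
  by rewrite -level_eq_top f_level /= size_eq.
- by move=> q q_le; rewrite ffunE x_ge0 ?f_level.
- move=> q r q_gt r_gt qr; rewrite !ffunE x_mono ?f_level //.
  exact: covers_level_preserving qr.
- move=> pp pp_chain; rewrite chain_sum_pullback ffunE.
  by apply: x_chain => i /=; rewrite f_level.
Qed.

Section TightChains.

Variables (R : realFieldType) (tau : seq nat) (k : nat).
Variables (x : {ffun Phat tau -> R}) (pp pp' : 'I_k.+1 -> Phat tau).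
Hypothesis x_poly : chain_order_polytope R tau k x.
Hypotheses (pp_chain : is_chain pp) (pp'_chain : is_chain pp').
Hypothesis pp_tight : chain_sum x pp = x (pp ord_max).

Let swap (i j : 'I_k.+1) : Phat tau := if j == i then pp' i else pp j.

Let swap_chain_le (i : 'I_k.+1) : chain_sum x (swap i) <= x (swap i ord_max).
Proof.
case: x_poly => _ _ _ _; apply => j; rewrite /swap.
by case: eqP => [->|_]; [exact: pp'_chain | exact: pp_chain].
Qed.

Lemma tight_chain_swap_inner (i : 'I_k.+1) : i != ord_max -> x (pp' i) <= x (pp i).
Proof.
move=> i_inner; have := swap_chain_le i.
rewrite /chain_sum (bigD1 i i_inner) /= /swap eqxx eq_sym (negbTE i_inner).
under eq_bigr => j /andP[_ /negbTE ->] do [].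
by rewrite -pp_tight /chain_sum (bigD1 i i_inner) lerD2r.
Qed.

Lemma tight_chain_swap_top : x (pp ord_max) <= x (pp' ord_max).
Proof.
have := swap_chain_le ord_max; rewrite /swap eqxx -pp_tight /chain_sum.
by under eq_bigr => j /negbTE -> do [].
Qed.

End TightChains.

Lemma tight_chains_eq (R : realFieldType) (tau : seq nat) (k : nat)
    (x : {ffun Phat tau -> R}) (pp pp' : 'I_k.+1 -> Phat tau) :
  chain_order_polytope R tau k x -> is_chain pp -> is_chain pp' ->
  chain_sum x pp = x (pp ord_max) -> chain_sum x pp' = x (pp' ord_max) ->
  forall i, x (pp' i) = x (pp i).
Proof.
move=> x_poly pp_chain pp'_chain pp_tight pp'_tight i; apply/eqP; rewrite eq_le.
have [->|i_inner] := eqVneq i ord_max.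
  by rewrite !tight_chain_swap_top.
by rewrite !tight_chain_swap_inner.
Qed.

Lemma sumn_reduce_tau (tau : seq nat) (k : nat) (pp pp' : 'I_k.+1 -> Phat tau) :
  all (fun t => 0 < t)%N tau -> (k <= size tau)%N -> is_chain pp -> is_chain pp' ->
  (sumn (reduce_tau tau k pp pp') + #|[set i : 'I_k.+1 | pp i != pp' i]| = sumn tau)%N.
Proof.
move=> tau_pos k_le pp_chain pp'_chain.
pose b j := nat_of_bool ((j < k.+1)%N && (pp (inord j) != pp' (inord j))).
have b_le j : (j < size tau)%N -> (b j <= nth 0%N tau j)%N.
  by move=> j_lt; have := all_nthP 0%N tau_pos j j_lt; rewrite /b; case: (_ && _).
have b_eq0 j : (minn k.+1 (size tau) <= j)%N -> b j = 0%N.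
  rewrite geq_min => /orP[k_lt | size_le]; first by rewrite /b ltnNge k_lt.
  rewrite /b; case: ltnP => //= j_le.
  (* Here k = size tau and index k is the level of hat1, where p and p' agree. *)
  have j_eq : j = size tau.
    by apply/anti_leq; rewrite size_le andbT -ltnS (leq_trans j_le).
  have top (p : 'I_k.+1 -> Phat tau) : is_chain p -> p (inord j) = hat1.
    by move=> p_chain; apply/eqP; rewrite -level_eq_top p_chain inordK // j_eq.
  by rewrite (top pp) // (top pp') // eqxx.
have sum_b n : (minn k.+1 (size tau) <= n)%N ->
    (\sum_(0 <= j < n) b j = \sum_(0 <= j < minn k.+1 (size tau)) b j)%N.
  move=> n_ge; rewrite (big_cat_nat (leq0n _) n_ge) /=.
  rewrite [X in (_ + X)%N]big1_seq ?addn0 //.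
  by move=> j /andP[_]; rewrite mem_index_iota => /andP[/b_eq0].
have -> : #|[set i : 'I_k.+1 | pp i != pp' i]| = (\sum_(0 <= j < size tau) b j)%N.
  rewrite sum_b ?geq_minr // -(sum_b k.+1) ?geq_minl // big_mkord -sum1_card.
  by rewrite big_mkcond; apply: eq_bigr => i _; rewrite in_set /b ltn_ord inord_val.
have -> : sumn (reduce_tau tau k pp pp') =
    (\sum_(0 <= j < size tau) (nth 0%N tau j - b j))%N.
  by rewrite /reduce_tau sumnE big_map /index_iota subn0.
rewrite sumnE [RHS](big_nth 0%N) -big_split big_nat_cond [RHS]big_nat_cond.
by apply: eq_bigr => j /andP[/andP[_ j_lt] _]; rewrite /= subnK // b_le.
Qed.

Section Deletion.

Variables (tau tau' : seq nat) (k : nat) (pp pp' : 'I_k.+1 -> Phat tau).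
Variables (e : Phat tau' -> Phat tau) (qq : 'I_k.+1 -> Phat tau').
Hypotheses (pp_chain : is_chain pp) (pp'_chain : is_chain pp').
Hypotheses (e_inj : injective e) (e_level : level_preserving e).
Hypothesis e_image :
  forall z, (exists q, e q = z) <-> ~ (exists i, pp i != pp' i /\ z = pp' i).
Hypothesis e_qq : forall i, e (qq i) = pp i.

(* Sends each deleted p'_i to p_i; the final [hat0] is never reached. *)
Definition retract (z : Phat tau) : Phat tau' :=
  if [pick q | e q == z] is Some q then q
  else if [pick i | pp' i == z] is Some i then qq i else hat0.

Lemma retractK : cancel e retract.
Proof. by move=> q; rewrite /retract; case: pickP => [q' /eqP/e_inj | /(_ q)/eqP]. Qed.

Lemma image_or_pp' (z : Phat tau) : (exists q, e q = z) \/ (exists i, z = pp' i).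
Proof.
case: (pickP (fun i => pp' i == z)) => [i /eqP <- | no_i]; first by right; exists i.
left; apply/e_image => -[i [_ z_eq]].
by have := no_i i; rewrite z_eq eqxx.
Qed.

Lemma retract_pp' (i : 'I_k.+1) : retract (pp' i) = qq i.
Proof.
rewrite /retract; case: pickP => [q /eqP eq_pp' | no_q].
  have [pp_eq|pp_neq] := eqVneq (pp i) (pp' i).
    by apply: e_inj; rewrite eq_pp' e_qq pp_eq.
  by exfalso; apply: (proj1 (e_image _) (ex_intro _ q eq_pp')); exists i.
case: pickP => [j /eqP | /(_ i)]; last by rewrite eqxx.
move=> /(congr1 level); rewrite !pp'_chain => -[ji].
by congr qq; apply: val_inj.
Qed.

Lemma retract_pp (i : 'I_k.+1) : retract (pp i) = qq i.
Proof. by rewrite -e_qq retractK. Qed.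

Lemma retract_level : level_preserving retract.
Proof.
move=> z; case: (image_or_pp' z) => [[q <-] | [i ->]].
  by rewrite retractK e_level.
by rewrite retract_pp' -e_level e_qq pp_chain pp'_chain.
Qed.

Variable R : realFieldType.
Hypothesis size_eq : size tau' = size tau.

Definition face (x : {ffun Phat tau -> R}) : Prop :=
  [/\ chain_order_polytope R tau k x,
      chain_sum x pp = x (pp ord_max) &
      chain_sum x pp' = x (pp' ord_max)].

Definition face' (y : {ffun Phat tau' -> R}) : Prop :=
  chain_order_polytope R tau' k y /\ chain_sum y qq = y (qq ord_max).

Lemma face_pullback (x : {ffun Phat tau -> R}) : face x -> face' (pullback e x).
Proof.
case=> x_poly pp_tight _; split.
  exact: chain_order_polytope_pullback size_eq e_level retract_level x_poly.
rewrite chain_sum_pullback ffunE e_qq -pp_tight.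
by apply: eq_bigr => i _; rewrite /= e_qq.
Qed.

Lemma face'_pullback (y : {ffun Phat tau' -> R}) : face' y -> face (pullback retract y).
Proof.
case=> y_poly qq_tight; split.
- exact: chain_order_polytope_pullback (esym size_eq) retract_level e_level y_poly.
- rewrite chain_sum_pullback ffunE retract_pp -qq_tight.
  by apply: eq_bigr => i _; rewrite /= retract_pp.
- rewrite chain_sum_pullback ffunE retract_pp' -qq_tight.
  by apply: eq_bigr => i _; rewrite /= retract_pp'.
Qed.

Lemma face_retractK (x : {ffun Phat tau -> R}) :
  face x -> pullback retract (pullback e x) = x.
Proof.
case=> x_poly pp_tight pp'_tight; apply/ffunP => z; rewrite !ffunE.
case: (image_or_pp' z) => [[q <-] | [i ->]]; first by rewrite retractK.
by rewrite retract_pp' e_qq (tight_chains_eq x_poly pp_chain pp'_chain).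
Qed.

End Deletion.

Theorem proposition3p7 (R : realFieldType) (tau : seq nat) (k : nat)
  (pp pp' : 'I_k.+1 -> Phat tau)
  (e : Phat (reduce_tau tau k pp pp') -> Phat tau)
  (qq : 'I_k.+1 -> Phat (reduce_tau tau k pp pp')) :
  all (fun t => 0 < t)%N tau ->
  (k <= size tau)%N ->
  is_chain pp -> is_chain pp' ->
  (* e identifies hat P_tau' with hat P_tau minus {p'_i : i in I} *)
  injective e ->
  (forall q, level (e q) = level q) ->
  (forall z : Phat tau, (exists q, e q = z) <-> ~ (exists i, pp i != pp' i /\ z = pp' i)) ->
  (* qq i is p_i (resp. a) seen in hat P_tau' *)
  (forall i, e (qq i) = pp i) ->
  let F := fun x : {ffun Phat tau -> R} =>
    [/\ chain_order_polytope R tau k x,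
        chain_sum x pp = x (pp ord_max) &
        chain_sum x pp' = x (pp' ord_max)] in
  let F' := fun y : {ffun Phat (reduce_tau tau k pp pp') -> R} =>
    chain_order_polytope R (reduce_tau tau k pp pp') k y /\
    chain_sum y qq = y (qq ord_max) in
  let nu := fun x : {ffun Phat tau -> R} => [ffun q => x (e q)] in
  [/\ (forall x, F x -> F' (nu x)),
      (forall x1 x2, F x1 -> F x2 -> nu x1 = nu x2 -> x1 = x2),
      (forall y, F' y -> exists2 x, F x & nu x = y) &
      codim tau F = codim (reduce_tau tau k pp pp') F' + (#|[set i : 'I_k.+1 | pp i != pp' i]|)%:Z].
Proof.
move=> tau_pos k_le pp_chain pp'_chain e_inj e_level e_image e_qq F F' nu.
have size_eq : size (reduce_tau tau k pp pp') = size tau by rewrite size_mkseq.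
pose g := retract pp' e qq.
have eK : cancel e g by exact: retractK.
have F_nu : forall x, F x -> F' (nu x) :=
  face_pullback pp_chain pp'_chain e_inj e_level e_image e_qq size_eq.
have F'_g : forall y, F' y -> F (pullback g y) :=
  face'_pullback pp_chain pp'_chain e_inj e_level e_image e_qq size_eq.
have gK : forall x, F x -> pullback g (nu x) = x :=
  face_retractK pp_chain pp'_chain e_inj e_image e_qq (R := R).
split=> [// | x1 x2 F1 F2 nu_eq | y F'y |].
- by rewrite -(gK _ F1) -(gK _ F2) nu_eq.
- by exists (pullback g y); [exact: F'_g | exact/pullbackK].
rewrite /codim (affdim_eq_pullback eK F_nu F'_g gK).
by rewrite -(sumn_reduce_tau tau_pos k_le pp_chain pp'_chain) PoszD addrAC.
Qed.
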